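(* Let $\mathbf{A}(i)$ for all $i=1,\ldots,k$ be conforming block triangular matrices over an idempotent semifield (e.g. max-plus algebra) given by \[ \mathbf{A}(i)=\mathbf{D}(i)\oplus\mathbf{T}(i),\quad \mathbf{D}(i)=\begin{pmatrix}\mathbf{D}_{1}(i) & \mathbf{0}\\ \mathbf{0} & \mathbf{D}_{2}(i)\end{pmatrix},\quad \mathbf{T}(i)=\begin{pmatrix}\mathbf{0} & \mathbf{T}_{12}(i)\\ \mathbf{0} & \mathbf{0}\end{pmatrix}. \] Let $\mathbf{A}_{k}=\mathbf{A}(1)\cdots\mathbf{A}(k)$, $\mathbf{D}_{j}(l,m)=\bigotimes_{i=l}^{m}\mathbf{D}_{j}(i)$ and $\mathbf{D}_{jk}=\mathbf{D}_{j}(1,k)$ for $j=1,2$, with empty products equal to the identity matrix $\mathbf{I}$. Then the following double-inequality holds: \[ \|\mathbf{D}_{1k}\|\oplus\|\mathbf{D}_{2k}\| \leq \|\mathbf{A}_{k}\| \leq \|\mathbf{D}_{1k}\|\oplus\|\mathbf{D}_{2k}\| \oplus \bigoplus_{j=1}^{k}\|\mathbf{T}(j)\| \bigoplus_{i=1}^{k}\|\mathbf{D}_{1}(1,i-1)\|\,\|\mathbf{D}_{2}(i+1,k)\|. \]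
   Context: Work in an idempotent semifield $(\mathbb{X},\oplus,\otimes,\mathbb{0},\mathbb{1})$ (e.g. max-plus algebra with $\oplus=\max$, $\otimes=+$, $\mathbb{0}=-\infty$, $\mathbb{1}=0$), totally ordered by $x\leq y\iff x\oplus y=y$; matrix operations are defined componentwise as usual with $\oplus$ and $\otimes$ (multiplication sign omitted). $\mathbf{0}$ denotes a zero matrix (all entries $\mathbb{0}$), $\mathbf{I}$ the identity matrix. The tropical norm of a matrix is $\|\mathbf{A}\|=\bigoplus_{i,j}a_{ij}$ (the maximum entry in max-plus algebra), satisfying $\|\mathbf{A}\oplus\mathbf{B}\|=\|\mathbf{A}\|\oplus\|\mathbf{B}\|$, $\|\mathbf{A}\mathbf{C}\|\leq\|\mathbf{A}\|\|\mathbf{C}\|$, $\|x\mathbf{A}\|=x\|\mathbf{A}\|$. *)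

From HB Require Import structures.
From mathcomp Require Import all_boot all_order all_algebra.
Set Implicit Arguments. Unset Strict Implicit. Unset Printing Implicit Defensive.
Import GRing.Theory.
Local Open Scope ring_scope.

(* An idempotent semifield, presented on a MathComp commutative non-trivial
   semiring R: "+" plays the role of (+) (tropical addition), "*" of (x),
   0 of the tropical zero and 1 of the tropical one. *)
Definition idempotent_semifield (R : comNzSemiRingType) : Prop :=
  (forall x : R, x + x = x) /\
  (forall x : R, x != 0 -> exists y : R, x * y = 1).

Definition tle {R : comNzSemiRingType} (x y : R) : Prop := x + y = y.

Definition tle_total (R : comNzSemiRingType) : Prop :=
  forall x y : R, tle x y \/ tle y x.

Definition tnorm {R : comNzSemiRingType} {m n : nat} (A : 'M[R]_(m, n)) : R :=
  \sum_(i < m) \sum_(j < n) A i j.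

Definition mxprod {R : comNzSemiRingType} {n : nat} (D : nat -> 'M[R]_n)
  (l m : nat) : 'M[R]_n :=
  \big[mulmx/1%:M]_(l <= i < m.+1) D i.

From HB Require Import structures.
From mathcomp Require Import all_boot all_order all_algebra.
Import GRing.Theory.
Local Open Scope ring_scope.

(* The product A(1)...A(k) is again block upper triangular, with diagonal
   blocks D1(1,k), D2(1,k) and upper right block
   sum_i D1(1,i-1) T12(i) D2(i+1,k).  The tropical norm of a block matrix is
   the sum of the norms of its blocks, and it is submultiplicative, so the
   lower bound is immediate and the upper bound reduces to bounding the norm
   of the corner block termwise. *)

Section IdempotentSemiring.
Context {R : comNzSemiRingType}.
Hypothesis addrr : forall x : R, x + x = x.

Lemma tle_refl (x : R) : tle x x.
Proof. exact: addrr. Qed.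

Lemma tle_trans {y x z : R} : tle x y -> tle y z -> tle x z.
Proof. by rewrite /tle => xy yz; rewrite -yz addrA xy. Qed.

Lemma tle0r (x : R) : tle 0 x.
Proof. by rewrite /tle add0r. Qed.

Lemma tle_addl (x y : R) : tle x (x + y).
Proof. by rewrite /tle addrA addrr. Qed.

Lemma tleD (x y x' y' : R) : tle x y -> tle x' y' -> tle (x + x') (y + y').
Proof. by rewrite /tle => xy xy'; rewrite addrACA xy xy'. Qed.

Lemma tle_add_lub (x y z : R) : tle x z -> tle y z -> tle (x + y) z.
Proof. by move=> xz yz; rewrite -(addrr z); apply: tleD. Qed.

Lemma tle_mul2r (z : R) {x y : R} : tle x y -> tle (x * z) (y * z).
Proof. by rewrite /tle => xy; rewrite -mulrDl xy. Qed.

Lemma tleM (x y x' y' : R) : tle x y -> tle x' y' -> tle (x * x') (y * y').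
Proof.
move=> xy xy'; apply: (tle_trans (tle_mul2r x' xy)).
by rewrite ![y * _]mulrC; apply: tle_mul2r.
Qed.

Lemma tle_sum_bound (I : Type) (r : seq I) (P : pred I) (F : I -> R) (M : R) :
  (forall i, P i -> tle (F i) M) -> tle (\sum_(i <- r | P i) F i) M.
Proof.
move=> FM; apply: (big_ind (tle^~ M)); first exact: tle0r.
  by move=> ? ?; apply: tle_add_lub.
exact: FM.
Qed.

Lemma tle_sum (I : Type) (r : seq I) (P : pred I) (F G : I -> R) :
  (forall i, P i -> tle (F i) (G i)) ->
  tle (\sum_(i <- r | P i) F i) (\sum_(i <- r | P i) G i).
Proof.
move=> FG; apply: (big_ind2 tle); first exact: tle_refl.
  by move=> ? ? ? ?; apply: tleD.
exact: FG.
Qed.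

Lemma tle_sum_term {I : eqType} {r : seq I} (F : I -> R) {i : I} :
  i \in r -> tle (F i) (\sum_(j <- r) F j).
Proof. by move=> ir; rewrite (big_rem i ir) /=; apply: tle_addl. Qed.

Lemma tle_sum_mul (I : eqType) (r : seq I) (F G : I -> R) :
  tle (\sum_(i <- r) F i * G i) ((\sum_(i <- r) F i) * \sum_(i <- r) G i).
Proof.
rewrite mulr_sumr big_seq [X in tle _ X]big_seq; apply: tle_sum => i ir.
by apply: tle_mul2r; apply: tle_sum_term.
Qed.

Lemma tnorm_entry m n (A : 'M[R]_(m, n)) i j : tle (A i j) (tnorm A).
Proof.
apply: (tle_trans (tle_sum_term (A i) (mem_index_enum j))).
exact: (tle_sum_term (fun i => \sum_j A i j) (mem_index_enum i)).
Qed.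

Lemma tnorm_mulmx {m n p} (A : 'M[R]_(m, n)) (B : 'M[R]_(n, p)) :
  tle (tnorm (A *m B)) (tnorm A * tnorm B).
Proof.
apply: tle_sum_bound => i _; apply: tle_sum_bound => j _.
rewrite mxE; apply: tle_sum_bound => l _.
by apply: tleM; apply: tnorm_entry.
Qed.

Lemma tnormD m n (A B : 'M[R]_(m, n)) : tnorm (A + B) = tnorm A + tnorm B.
Proof.
rewrite /tnorm -big_split; apply: eq_bigr => i _.
by rewrite -big_split; apply: eq_bigr => j _; rewrite mxE.
Qed.

Lemma tnorm0 m n : tnorm (0 : 'M[R]_(m, n)) = 0.
Proof. by rewrite /tnorm big1 // => i _; rewrite big1 // => j _; rewrite mxE. Qed.

Lemma tnorm_sum m n (I : Type) (r : seq I) (P : pred I) (F : I -> 'M[R]_(m, n)) :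
  tnorm (\sum_(i <- r | P i) F i) = \sum_(i <- r | P i) tnorm (F i).
Proof. exact: (big_morph _ (@tnormD m n) (@tnorm0 m n)). Qed.

Lemma tnorm_block m1 m2 p1 p2 (Aul : 'M[R]_(m1, p1)) (Aur : 'M[R]_(m1, p2))
    (Adl : 'M[R]_(m2, p1)) (Adr : 'M[R]_(m2, p2)) :
  tnorm (block_mx Aul Aur Adl Adr)
  = tnorm Aul + tnorm Aur + (tnorm Adl + tnorm Adr).
Proof.
rewrite /tnorm big_split_ord; congr (_ + _); rewrite -big_split;
  apply: eq_bigr => i _; rewrite big_split_ord; congr (_ + _);
  apply: eq_bigr => j _;
  by rewrite ?block_mxEul ?block_mxEur ?block_mxEdl ?block_mxEdr.
Qed.

Lemma big_mulmx_rcons n (I : Type) (r : seq I) (x : I) (F : I -> 'M[R]_n) :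
  \big[mulmx/1%:M]_(i <- rcons r x) F i = \big[mulmx/1%:M]_(i <- r) F i *m F x.
Proof.
elim: r => [|a r IHr]; first by rewrite big_cons !big_nil mulmx1 mul1mx.
by rewrite rcons_cons !big_cons IHr mulmxA.
Qed.

Lemma mxprodSr n (F : nat -> 'M[R]_n) l m : (l <= m.+1)%N ->
  mxprod F l m.+1 = mxprod F l m *m F m.+1.
Proof.
move=> lm; rewrite /mxprod -big_mulmx_rcons /index_iota subSn //.
by rewrite -addn1 iotaD cats1 subnKC.
Qed.

Lemma eq_mxprod {n} {F G : nat -> 'M[R]_n} {l m : nat} :
  F =1 G -> mxprod F l m = mxprod G l m.
Proof. by move=> FG; apply: eq_bigr => i _; apply: FG. Qed.

Lemma mxprod_geq n (F : nat -> 'M[R]_n) l m : (m < l)%N -> mxprod F l m = 1%:M.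
Proof. by move=> ml; rewrite /mxprod big_geq. Qed.

Section BlockUpperTriangular.
Context {n1 n2 : nat}.
Variables (D1 : nat -> 'M[R]_n1) (D2 : nat -> 'M[R]_n2).
Variable T12 : nat -> 'M[R]_(n1, n2).

Definition mxprod_corner (m : nat) : 'M[R]_(n1, n2) :=
  \sum_(1 <= i < m.+1) mxprod D1 1 i.-1 *m T12 i *m mxprod D2 i.+1 m.

Lemma mxprod_block_upper m :
  mxprod (fun i => block_mx (D1 i) (T12 i) 0 (D2 i)) 1 m
  = block_mx (mxprod D1 1 m) (mxprod_corner m) 0 (mxprod D2 1 m).
Proof.
elim: m => [|m IHm].
  by rewrite /mxprod_corner big_geq // !mxprod_geq // scalar_mx_block.
rewrite !mxprodSr // IHm mulmx_block !mulmx0 !mul0mx !addr0 !add0r.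
congr block_mx; rewrite /mxprod_corner (big_nat_recr m.+1) //=.
rewrite [mxprod D2 m.+2 _]mxprod_geq // mulmx1.
rewrite addrC mulmx_suml; congr (_ + _); apply: eq_big_nat => i /andP[_ im].
by rewrite mxprodSr // mulmxA.
Qed.

Lemma tnorm_mxprod_corner m :
  tle (tnorm (mxprod_corner m))
      ((\sum_(1 <= j < m.+1) tnorm (T12 j)) *
       \sum_(1 <= i < m.+1) tnorm (mxprod D1 1 i.-1) * tnorm (mxprod D2 i.+1 m)).
Proof.
apply: tle_trans (tle_sum_mul _ _ _ _); rewrite tnorm_sum; apply: tle_sum => i _.
apply: (tle_trans (tnorm_mulmx _ _)); rewrite mulrCA mulrA.
by apply/tle_mul2r/tnorm_mulmx.
Qed.

End BlockUpperTriangular.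
End IdempotentSemiring.

Theorem proposition1 (R : comNzSemiRingType)
  (hR : idempotent_semifield R) (htot : tle_total R)
  (n1 n2 k : nat)
  (D1 : nat -> 'M[R]_n1) (D2 : nat -> 'M[R]_n2)
  (T12 : nat -> 'M[R]_(n1, n2)) :
  let D := fun i => block_mx (D1 i) 0 0 (D2 i) in
  let T := fun i => block_mx 0 (T12 i) 0 0 in
  let A := fun i => D i + T i in
  let Ak := mxprod A 1 k in
  let D1k := mxprod D1 1 k in
  let D2k := mxprod D2 1 k in
  tle (tnorm D1k + tnorm D2k) (tnorm Ak) /\
  tle (tnorm Ak)
      (tnorm D1k + tnorm D2k +
       (\sum_(1 <= j < k.+1) tnorm (T j)) *
       (\sum_(1 <= i < k.+1) tnorm (mxprod D1 1 i.-1) * tnorm (mxprod D2 i.+1 k))).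
Proof.
move=> D T A Ak D1k D2k; have [addrr _] := hR.
have A_block i : A i = block_mx (D1 i) (T12 i) 0 (D2 i).
  by rewrite /A /D /T add_block_mx !(addr0, add0r).
have tnormT j : tnorm (T j) = tnorm (T12 j).
  by rewrite /T tnorm_block !tnorm0 add0r !addr0.
have tnormAk : tnorm Ak = tnorm D1k + tnorm D2k + tnorm (mxprod_corner D1 D2 T12 k).
  by rewrite /Ak (eq_mxprod A_block) mxprod_block_upper tnorm_block tnorm0 add0r addrAC.
rewrite tnormAk (eq_bigr _ (fun j _ => tnormT j)); split.
  exact: tle_addl.
by apply: tleD; [apply: tle_refl | apply: tnorm_mxprod_corner].
Qed.
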